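(* Let $a\ge b\ge1$ be integers and define integers $c_j,d_j$ ($j\in\mathbb Z_+$) by $c_0=d_0=0$, $c_1=d_1=1$, $c_{k+2}+c_k=a d_{k+1}$, $d_{k+2}+d_k=b c_{k+1}$. Then for all $j\in\mathbb Z_+$ we have $c_{2j+1}=d_{2j+1}$ and $c_{2j}=\frac{a}{b}d_{2j}$.
   Context: $\mathbb Z_+=\{0,1,2,\dots\}$. *)

From mathcomp Require Import all_boot all_order all_algebra.

(* The pair of identities c_(2j+1) = d_(2j+1) and b c_(2j) = a d_(2j) is
   preserved by two steps of the recurrence: each identity at one index,
   together with the other identity at the neighbouring index, yields the
   same identity two indices later. *)
From mathcomp Require Import all_boot all_order all_algebra.
From mathcomp Require Import ring.
Import Order.TTheory GRing.Theory Num.Theory.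
Local Open Scope ring_scope.

Section CoupledRecurrence.

Variables (R : comRingType) (a b : R) (c d : nat -> R).
Hypothesis c_rec : forall k, c k.+2 + c k = a * d k.+1.
Hypothesis d_rec : forall k, d k.+2 + d k = b * c k.+1.

Lemma c_recE k : c k.+2 = a * d k.+1 - c k.
Proof. by rewrite -c_rec addrK. Qed.

Lemma d_recE k : d k.+2 = b * c k.+1 - d k.
Proof. by rewrite -d_rec addrK. Qed.

Lemma balanced_step k :
  c k.+1 = d k.+1 -> b * c k = a * d k -> b * c k.+2 = a * d k.+2.
Proof.
move=> eq_cd bal; rewrite c_recE d_recE eq_cd !mulrBr bal; ring.
Qed.

Lemma equal_step k :
  b * c k.+1 = a * d k.+1 -> c k = d k -> c k.+2 = d k.+2.
Proof. by move=> bal eq_cd; rewrite c_recE d_recE bal eq_cd. Qed.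

Lemma parity_invariant :
  b * c 0 = a * d 0 -> c 1 = d 1 ->
  forall j, c (2 * j).+1 = d (2 * j).+1 /\ b * c (2 * j)%N = a * d (2 * j)%N.
Proof.
move=> bal0 eq1; elim=> [|j [eq_odd bal_even]]; first by rewrite muln0.
have bal_next := balanced_step _ eq_odd bal_even.
by rewrite mulnS; split=> //; apply: equal_step.
Qed.

End CoupledRecurrence.

Arguments parity_invariant {R a b c d}.

Lemma intr_div_of_mul (F : numFieldType) (a b x y : int) :
  b != 0 -> b * x = a * y -> x%:~R = (a%:~R / b%:~R : F) * y%:~R.
Proof.
move=> b_neq0 bxy; have bF_neq0 : (b%:~R : F) != 0 by rewrite intr_eq0.
apply: (mulfI bF_neq0).
by rewrite mulrA mulrCA divff // mulr1 -!intrM bxy.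
Qed.

Theorem lemma2p5 (a b : int) :
  1 <= b -> b <= a ->
  forall c d : nat -> int,
    c 0%N = 0 -> d 0%N = 0 -> c 1%N = 1 -> d 1%N = 1 ->
    (forall k : nat, c k.+2 + c k = a * d k.+1) ->
    (forall k : nat, d k.+2 + d k = b * c k.+1) ->
    forall j : nat,
      c (2 * j).+1 = d (2 * j).+1 /\
      (c (2 * j)%N)%:~R = (a%:~R / b%:~R : rat) * (d (2 * j)%N)%:~R.
Proof.
move=> b_ge1 _ c d c0 d0 c1 d1 c_rec d_rec j.
have bal0 : b * c 0%N = a * d 0%N by rewrite c0 d0 !mulr0.
have eq1 : c 1%N = d 1%N by rewrite c1 d1.
have [eq_odd bal_even] := parity_invariant c_rec d_rec bal0 eq1 j.
split=> //; apply: intr_div_of_mul bal_even.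
by rewrite gt_eqF // (lt_le_trans ltr01).
Qed.
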